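(* Let $f:\mathbb R^n\to\mathbb R$ be a convex polynomial of degree $d$ such that $f(\mathbf x)=s(\mathbf x)+p(\mathbf x)$ for all $\mathbf x\in\mathbb R^n$, where $s$ is a separable polynomial (i.e., $s(\mathbf x)=\sum_{j=1}^n s_j(x_j)$ for univariate polynomials $s_j$) and $p$ is a polynomial consisting only of non-separable monomials (monomials involving at least two distinct variables). Then $\deg(s)\ge\deg(p)$. *)

From HB Require Import structures.
From mathcomp Require Import all_boot all_order all_algebra.
From mathcomp Require Import reals.
From mathcomp Require Import mpoly.
Set Implicit Arguments. Unset Strict Implicit. Unset Printing Implicit Defensive.
Import Order.TTheory GRing.Theory Num.Theory.
Local Open Scope ring_scope.

Definition convex_mpoly (R : realType) (n : nat) (f : {mpoly R[n]}) : Prop :=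
  forall (x y : 'I_n -> R) (t : R), 0 <= t -> t <= 1 ->
    f.@[fun i => t * x i + (1 - t) * y i] <= t * f.@[x] + (1 - t) * f.@[y].

Definition separable_mpoly (R : realType) (n : nat) (s : {mpoly R[n]}) : Prop :=
  exists sj : 'I_n -> {poly R},
    s = \sum_(j < n) (map_poly (@mpolyC n R) (sj j)).['X_j].

Definition nonsep_monomial (n : nat) (m : 'X_{1..n}) : bool :=
  (1 < #|[pred i : 'I_n | m i != 0%N]|)%N.

Definition nonsep_mpoly (R : realType) (n : nat) (p : {mpoly R[n]}) : Prop :=
  forall m, m \in msupp p -> nonsep_monomial m.

(* Let D = deg p and suppose deg s < D.  Along a line l |-> l x the polynomial
   f becomes a univariate polynomial whose coefficient of l^D is p_D(x), where
   p_D is the degree-D homogeneous part of p; s contributes nothing there.  On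
   the coordinate axes p vanishes, since each of its monomials involves two
   variables, so there f = s has degree < D.  Convexity propagates this bound
   to every line: by Jensen, f(l x) <= (1/n) sum_i f(l n x_i e_i), and by
   midpoint convexity f(l x) >= 2 f(0) - f(-l x).  Squeezed between two
   polynomials of degree < D, l |-> f(l x) has degree < D, so p_D(x) = 0 for
   every x.  Hence p_D = 0, which contradicts the leading monomial of p having
   degree D. *)

From HB Require Import structures.
From mathcomp Require Import all_boot all_order all_algebra.
From mathcomp Require Import reals mpoly polyrcf.
From mathcomp Require Import ring lra zify.
Set Implicit Arguments. Unset Strict Implicit. Unset Printing Implicit Defensive.
Import Order.TTheory GRing.Theory Num.Theory.
Local Open Scope ring_scope.

Section RealPoly.
Variable R : realFieldType.
Implicit Types r : {poly R}.

Lemma lead_coef_ge0 r : (forall l, 0 <= r.[l]) -> 0 <= lead_coef r.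
Proof.
move=> r_ge0; rewrite leNgt; apply/negP => lc_lt0.
have [l ge_lc] : exists l, forall y, l <= y -> lead_coef (- r) <= (- r).[y].
  by apply: poly_pinfty_gt_lc; rewrite lead_coefN oppr_gt0.
have := ge_lc l (lexx l); rewrite lead_coefN hornerN lerN2 => le_lc.
by have := le_trans (r_ge0 l) le_lc; rewrite leNgt lc_lt0.
Qed.

Lemma size_poly_sandwich lo r hi :
  (forall l, lo.[l] <= r.[l]) -> (forall l, r.[l] <= hi.[l]) ->
  (size r <= maxn (size lo) (size hi))%N.
Proof.
move=> lo_le le_hi; rewrite leqNgt gtn_max; apply/negP => /andP [lo_lt hi_lt].
have lcD : lead_coef (r - lo) = lead_coef r by rewrite lead_coefDl ?size_polyN.
have lcB : lead_coef (hi - r) = - lead_coef r.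
  by rewrite addrC lead_coefDl ?size_polyN ?lead_coefN.
have lc_ge0 : 0 <= lead_coef r.
  by rewrite -lcD lead_coef_ge0 // => l; rewrite hornerD hornerN subr_ge0.
have lc_le0 : lead_coef r <= 0.
  by rewrite -oppr_ge0 -lcB lead_coef_ge0 // => l; rewrite hornerD hornerN subr_ge0.
have /eqP : lead_coef r = 0 by apply/eqP; rewrite eq_le lc_le0.
by rewrite lead_coef_eq0 => /eqP r0; move: lo_lt; rewrite r0 size_poly0.
Qed.

End RealPoly.

Section PolyIdentity.
Variable R : numDomainType.

Lemma poly_eq0_of_horner (r : {poly R}) : (forall l, r.[l] = 0) -> r = 0.
Proof.
move=> r0; apply: (@roots_geq_poly_eq0 _ r [seq i%:R | i <- iota 0 (size r)]).
- by apply/allP => _ /mapP [i _ ->]; apply/rootP.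
- by rewrite map_inj_uniq ?iota_uniq // => i j /eqP; rewrite eqr_nat => /eqP.
- by rewrite size_map size_iota.
Qed.

Lemma eq_poly_of_horner (r1 r2 : {poly R}) :
  (forall l, r1.[l] = r2.[l]) -> r1 = r2.
Proof.
move=> r12; apply/subr0_eq/poly_eq0_of_horner => l.
by rewrite hornerD hornerN r12 subrr.
Qed.

End PolyIdentity.

Lemma radix_inj n B (a b : 'I_n -> nat) :
  (forall i, a i < B)%N -> (forall i, b i < B)%N ->
  (\sum_i a i * B ^ i = \sum_i b i * B ^ i)%N -> a =1 b.
Proof.
elim: n a b => [|n IH] a b a_lt b_lt; first by move=> _ [].
rewrite !big_ord_recl !expn0 !muln1.
have shift c : (\sum_(i < n) c (lift ord0 i) * B ^ bump 0 i =
                 (\sum_(i < n) c (lift ord0 i) * B ^ i) * B)%N.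
  rewrite big_distrl; apply: eq_bigr => i _.
  by rewrite /bump /= add1n expnS mulnCA mulnC.
rewrite !shift => eq_ab.
have B_gt0 : (0 < B)%N by apply: leq_ltn_trans (a_lt ord0).
have a0 : a ord0 = b ord0.
  by move: (congr1 (modn^~ B) eq_ab); rewrite !(addnC (_ ord0)) !modnMDl !modn_small.
move: eq_ab; rewrite a0 => /addnI /eqP; rewrite eqn_mul2r gtn_eqF //= => /eqP eq_tl.
move=> i; case: (unliftP ord0 i) => [j ->|->] //.
exact: (IH (a \o lift ord0) (b \o lift ord0) (fun j => a_lt _) (fun j => b_lt _) eq_tl).
Qed.

Lemma mnm_le_mdeg n (m : 'X_{1..n}) i : (m i <= mdeg m)%N.
Proof. by rewrite mdegE (bigD1 i) //= leq_addr. Qed.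

Lemma mpoly_eq0_of_meval (R : numDomainType) n (q : {mpoly R[n]}) :
  (forall x, q.@[x] = 0) -> q = 0.
Proof.
move=> q0; pose B := msize q; pose e (m : 'X_{1..n}) := (\sum_i m i * B ^ i)%N.
have e_inj : {in msupp q &, injective e}.
  have lt_B (m : 'X_{1..n}) i : m \in msupp q -> (m i < B)%N.
    by move=> mq; exact: leq_ltn_trans (mnm_le_mdeg m i) (msize_mdeg_lt mq).
  move=> m1 m2 m1q m2q /radix_inj eq12; apply/mnmP => i.
  by apply: eq12 => j; apply: lt_B.
(* Kronecker substitution: x_i := mu ^+ B ^ i sends the monomials of q to
   pairwise distinct powers of mu, since base-B digits are unique. *)
pose V : {poly R} := \sum_(m <- msupp q) q@_m *: 'X^(e m).
have V0 : V = 0.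
  apply: poly_eq0_of_horner => mu; rewrite -(q0 (fun i => mu ^+ (B ^ i))).
  rewrite mevalE horner_sum; apply: eq_bigr => m _.
  rewrite hornerZ hornerXn -prodrXr; congr (_ * _).
  by apply: eq_bigr => i _; rewrite -exprM mulnC.
apply/mpolyP => m; rewrite mcoeff0.
have [mq|/memN_msupp_eq0 //] := boolP (m \in msupp q).
transitivity V`_(e m); last by rewrite V0 coef0.
rewrite coef_sum (bigD1_seq m) ?msupp_uniq //= coefZ coefXn eqxx mulr1.
rewrite big1_seq ?addr0 // => m' /andP [m'_neq m'q].
rewrite coefZ coefXn; case: eqP => [/e_inj eq_m|]; last by rewrite mulr0.
by rewrite eq_m ?eqxx in m'_neq.
Qed.

Section LinePoly.
Variables (R : comNzRingType) (n : nat).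
Implicit Types (p q : {mpoly R[n]}) (x : 'I_n -> R).

Lemma meval_dhomog d p x l :
  p \is d.-homog -> p.@[fun i => l * x i] = l ^+ d * p.@[x].
Proof.
move=> /dhomogP p_d; rewrite !mevalE mulr_sumr; apply: eq_big_seq => m mp.
have -> : d = (\sum_i m i)%N by rewrite -mdegE; apply/esym/p_d.
rewrite mulrCA -prodrXr -big_split /=; congr (_ * _).
by apply: eq_bigr => i _; rewrite exprMn.
Qed.

Definition line_poly q x : {poly R} := \poly_(d < msize q) (pihomog mdeg d q).@[x].

Lemma horner_line_poly q x l : (line_poly q x).[l] = q.@[fun i => l * x i].
Proof.
rewrite horner_poly [in RHS](pihomog_partitionE (leqnn (msize q))) raddf_sum.
by apply: eq_bigr => d _ /=; rewrite (meval_dhomog (d := d)) ?pihomogP // mulrC.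
Qed.

Lemma size_line_poly q x : (size (line_poly q x) <= msize q)%N.
Proof. exact: size_poly. Qed.

Lemma coef_line_poly q x d :
  (d < msize q)%N -> (line_poly q x)`_d = (pihomog mdeg d q).@[x].
Proof. by move=> lt_d; rewrite coef_poly lt_d. Qed.

Lemma pihomog_msize_neq0 p : p != 0 -> pihomog mdeg (msize p).-1 p != 0.
Proof.
move=> p_neq0; apply/eqP => /(congr1 (mcoeff (mlead p))).
have lead_deg : mdeg (mlead p) = (msize p).-1 by rewrite -mlead_deg.
rewrite mcoeff0 pihomogE raddf_sum big_mkcond.
rewrite (bigD1_seq (mlead p)) ?msupp_uniq ?mlead_supp //= lead_deg eqxx.
rewrite mcoeffZ mcoeffX eqxx mulr1 big1_seq ?addr0 => [|m /andP [m_neq _]].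
  by apply/eqP; rewrite -mcoeff_msupp mlead_supp.
by case: ifP => // _; rewrite mcoeffZ mcoeffX (negbTE m_neq) mulr0.
Qed.

End LinePoly.

Definition axis (R : nmodType) n (i : 'I_n) (a : R) : 'I_n -> R :=
  fun j => if j == i then a else 0.

Lemma axis_scale (R : pzSemiRingType) n (i : 'I_n) (a l : R) :
  (fun j => l * axis i a j) =1 axis i (l * a).
Proof. by move=> j; rewrite /axis; case: eqP; rewrite ?mulr0. Qed.

Lemma nonsep_mdeg n (m : 'X_{1..n}) : nonsep_monomial m -> (1 < mdeg m)%N.
Proof.
case/card_gt1P => [a [b [ma mb a_neq_b]]]; rewrite !inE in ma mb.
rewrite mdegE (bigD1 a) //= (bigD1 b) 1?eq_sym //=; lia.
Qed.

Lemma nonsep_meval_axis (R : realType) n (p : {mpoly R[n]}) i a :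
  nonsep_mpoly p -> p.@[axis i a] = 0.
Proof.
move=> p_nonsep; rewrite mevalE big1_seq // => m /andP [_ mp].
have [b [c [mb mc b_neq_c]]] := card_gt1P (p_nonsep m mp); rewrite !inE in mb mc.
have [j mj j_neq_i] : exists2 j, m j != 0%N & j != i.
  by case: (eqVneq b i) => [b_i|]; [exists c; rewrite // -b_i eq_sym | exists b].
by rewrite (bigD1 j) //= /axis (negbTE j_neq_i) expr0n (negbTE mj) mul0r mulr0.
Qed.

Section ConvexMpoly.
Variables (R : realType) (n : nat) (f : {mpoly R[n]}).
Hypothesis f_convex : convex_mpoly f.

Lemma convex_mean_le k (ys : 'I_k -> 'I_n -> R) : (0 < k)%N ->
  f.@[fun j => k%:R^-1 * \sum_i ys i j] <= k%:R^-1 * \sum_i f.@[ys i].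
Proof.
case: k ys => [//|k] ys _; elim: k ys => [|k IH] ys.
  have inv1 : (1%:R : R)^-1 = 1 := invr1 R.
  by rewrite (@meval_eq _ _ _ (ys ord0)) => [|j]; rewrite big_ord1 inv1 mul1r.
set t : R := k.+2%:R^-1.
have t_ge0 : 0 <= t by rewrite invr_ge0.
have t_le1 : t <= 1 by rewrite invf_le1 ?ler1n.
have weight : (1 - t) * k.+1%:R^-1 = t.
  by rewrite /t -natr1; field; rewrite nat1r natr1 !pnatr_eq0.
pose ys' i := ys (widen_ord (leqnSn k.+1) i).
have mean_split : (fun j => k.+2%:R^-1 * \sum_i ys i j) =1
    (fun j => t * ys ord_max j + (1 - t) * (k.+1%:R^-1 * \sum_i ys' i j)).
  by move=> j; rewrite big_ord_recr /= mulrA weight mulrDr addrC.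
rewrite (meval_eq _ mean_split); apply: le_trans (f_convex _ _ t_ge0 t_le1) _.
rewrite big_ord_recr /= -/t mulrDr addrC lerD2r -[in leRHS]weight -mulrA.
by apply: ler_wpM2l (IH ys'); rewrite subr_ge0.
Qed.

Lemma convex_midpoint_ge x :
  2 * f.@[fun => 0] - f.@[fun i => - x i] <= f.@[x].
Proof.
have half_ge0 : (0 : R) <= 2^-1 by rewrite invr_ge0.
have half_le1 : (2^-1 : R) <= 1 by rewrite invf_le1 ?ler1n.
have := f_convex x (fun i => - x i) half_ge0 half_le1.
rewrite (@meval_eq _ _ _ (fun => 0)) => [|i]; last by field.
lra.
Qed.

Lemma convex_le_axes_mean x : (0 < n)%N ->
  f.@[x] <= n%:R^-1 * \sum_i f.@[axis i (n%:R * x i)].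
Proof.
move=> n_gt0; apply: le_trans (convex_mean_le _ n_gt0).
rewrite le_eqVlt; apply/orP; left; apply/eqP/meval_eq => j; rewrite (bigD1 j) //= big1 => [|i i_neq_j]; last first.
  by rewrite /axis eq_sym (negbTE i_neq_j).
by rewrite /axis eqxx addr0 mulKf // pnatr_eq0 -lt0n.
Qed.

Lemma size_line_poly_convex k x : (0 < n)%N -> (0 < k)%N ->
  (forall i a, size (line_poly f (axis i a)) <= k)%N ->
  (size (line_poly f x) <= k)%N.
Proof.
move=> n_gt0 k_gt0 size_axes.
pose hi y : {poly R} := n%:R^-1 *: \sum_i line_poly f (axis i (n%:R * y i)).
have size_hi y : (size (hi y) <= k)%N.
  apply: leq_trans (size_scale_leq _ _) _; apply: leq_trans (size_sum _ _ _) _.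
  by apply/bigmax_leqP => i _.
have le_hi y l : f.@[fun j => l * y j] <= (hi y).[l].
  apply: le_trans (convex_le_axes_mean _ n_gt0) _.
  rewrite hornerZ horner_sum le_eqVlt; apply/orP; left; apply/eqP; congr (_ * _).
  apply: eq_bigr => i _; rewrite horner_line_poly (meval_eq _ (axis_scale _ _ _)).
  by rewrite mulrCA.
pose lo := (2 * f.@[fun => 0])%:P - hi (fun i => - x i).
have ge_lo l : lo.[l] <= (line_poly f x).[l].
  rewrite hornerD hornerN hornerC horner_line_poly.
  have := convex_midpoint_ge (fun j => l * x j); have := le_hi (fun i => - x i) l.
  rewrite (@meval_eq _ _ _ (fun j => - (l * x j))) => [|j]; last by rewrite mulrN.
  lra.
apply: leq_trans (size_poly_sandwich ge_lo _) _ => [l|].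
  by rewrite horner_line_poly; apply: le_hi.
rewrite geq_max size_hi andbT; apply: leq_trans (size_polyD _ _) _.
by rewrite geq_max size_polyN size_hi (leq_trans (size_polyC_leq1 _)).
Qed.

End ConvexMpoly.

Theorem theorem3 (R : realType) (n : nat) (f s p : {mpoly R[n]}) :
  convex_mpoly f ->
  (forall x : 'I_n -> R, f.@[x] = s.@[x] + p.@[x]) ->
  separable_mpoly s ->
  nonsep_mpoly p ->
  (msize p <= msize s)%N.
Proof.
move=> f_convex f_eq _ p_nonsep.
have [->|p_neq0] := eqVneq p 0; first by rewrite msize0.
set D := (msize p).-1.
have lead_nonsep := p_nonsep _ (mlead_supp p_neq0).
have n_gt0 : (0 < n)%N.
  by case/card_gt1P: lead_nonsep => i _; apply: leq_ltn_trans (ltn_ord i).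
have D_gt0 : (0 < D)%N.
  by rewrite /D -mlead_deg //; apply: ltnW (nonsep_mdeg lead_nonsep).
rewrite leqNgt; apply/negP => s_lt_p.
have s_le_D : (msize s <= D)%N by rewrite /D -ltnS (ltn_predK s_lt_p).
have line_f x : line_poly f x = line_poly s x + line_poly p x.
  by apply: eq_poly_of_horner => l; rewrite hornerD !horner_line_poly f_eq.
have size_axes i a : (size (line_poly f (axis i a)) <= D)%N.
  have -> : line_poly f (axis i a) = line_poly s (axis i a).
    apply: eq_poly_of_horner => l; rewrite !horner_line_poly f_eq.
    by rewrite [p.@[_]](meval_eq _ (axis_scale _ _ _)) nonsep_meval_axis // addr0.
  exact: leq_trans (size_line_poly _ _) s_le_D.
have top_vanish x : (pihomog mdeg D p).@[x] = 0.
  have size_f : (size (line_poly f x) <= D)%N by apply: size_line_poly_convex.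
  have s_D : (line_poly s x)`_D = 0.
    exact: nth_default (leq_trans (size_line_poly s x) s_le_D).
  have D_lt : (D < msize p)%N by rewrite ltn_predL lt0n msize_poly_eq0.
  rewrite -(coef_line_poly x D_lt).
  by move: (nth_default 0 size_f); rewrite line_f coefD s_D add0r.
by have := pihomog_msize_neq0 p_neq0; rewrite (mpoly_eq0_of_meval top_vanish) eqxx.
Qed.
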